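(* Let $\alpha,\beta,\mu$ be real parameters with $0<\alpha\leq 1$, $\beta>0$, $0<\mu\leq 1$. For an arbitrary initial point $(x^{(0)},y^{(0)})\in\mathbb{R}^2_+$ define recursively, for $n\geq 1$, $$x^{(n)}=\beta y^{(n-1)}-\frac{\alpha x^{(n-1)}}{1+x^{(n-1)}}+x^{(n-1)},\qquad y^{(n)}=\frac{\alpha x^{(n-1)}}{1+x^{(n-1)}}-\mu y^{(n-1)}+y^{(n-1)}.$$ Then for all $n\geq 0$: $$0\leq y^{(n)}\leq y^{(0)}\ \text{ if } y^{(0)}>\frac{\alpha}{\mu},\qquad 0\leq y^{(n)}\leq \frac{\alpha}{\mu}\ \text{ if } y^{(0)}<\frac{\alpha}{\mu}.$$
   Context: $\mathbb{R}^2_+=\{(x,y)\in\mathbb{R}^2: x\geq 0,\ y\geq 0\}$. Under the stated parameter conditions the map $(x,y)\mapsto\left(\beta y-\frac{\alpha x}{1+x}+x,\ \frac{\alpha x}{1+x}-\mu y+y\right)$ maps $\mathbb{R}^2_+$ into itself, so all $x^{(n)},y^{(n)}$ are nonnegative. *)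

From Stdlib Require Import Reals.
Open Scope R_scope.

Definition step (alpha beta mu : R) (p : R * R) : R * R :=
  let x := fst p in let y := snd p in
  (beta * y - alpha * x / (1 + x) + x, alpha * x / (1 + x) - mu * y + y).

Fixpoint orbit (alpha beta mu x0 y0 : R) (n : nat) : R * R :=
  match n with
  | O => (x0, y0)
  | S k => step alpha beta mu (orbit alpha beta mu x0 y0 k)
  end.

(* The saturating term [alpha x / (1 + x)] lies between 0 and [min alpha x].
   Hence [x] stays nonnegative, and [y' = (1 - mu) y + alpha x / (1 + x)] is a
   convex combination bounded by [(1 - mu) M + alpha <= M] whenever
   [alpha <= mu M]: every box [0, oo) x [0, M] with [alpha <= mu M] is forward
   invariant.  Take [M = y0] if [y0 > alpha / mu] and [M = alpha / mu] otherwise. *)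
From Stdlib Require Import Reals Lra.
Open Scope R_scope.

Lemma saturation_bounds (alpha x : R) :
  0 <= alpha -> alpha <= 1 -> 0 <= x ->
  0 <= alpha * x / (1 + x) <= alpha /\ alpha * x / (1 + x) <= x.
Proof.
  intros Ha Ha1 Hx.
  set (f := alpha * x / (1 + x)).
  assert (Hf : f * (1 + x) = alpha * x) by (unfold f; field; lra).
  assert (Hf0 : 0 <= f).
  { unfold f, Rdiv.
    apply Rmult_le_pos; [nra | apply Rlt_le, Rinv_0_lt_compat; lra]. }
  nra.
Qed.

Definition in_box (M : R) (p : R * R) : Prop :=
  0 <= fst p /\ 0 <= snd p <= M.

Lemma step_in_box (alpha beta mu M : R) (p : R * R) :
  0 <= alpha -> alpha <= 1 -> 0 <= beta -> mu <= 1 -> alpha <= mu * M ->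
  in_box M p -> in_box M (step alpha beta mu p).
Proof.
  destruct p as [x y]; unfold in_box, step; simpl.
  intros Ha Ha1 Hb Hm1 HM [Hx Hy].
  destruct (saturation_bounds alpha x Ha Ha1 Hx) as [[Hf0 Hfa] Hfx].
  split; [nra | split; nra].
Qed.

Lemma orbit_in_box (alpha beta mu x0 y0 M : R) :
  0 <= alpha -> alpha <= 1 -> 0 <= beta -> mu <= 1 -> alpha <= mu * M ->
  in_box M (x0, y0) -> forall n, in_box M (orbit alpha beta mu x0 y0 n).
Proof.
  intros Ha Ha1 Hb Hm1 HM H0 n.
  induction n as [|n IH]; [exact H0 |].
  now apply step_in_box.
Qed.

Theorem lemma1 (alpha beta mu x0 y0 : R)
  (Ha0 : 0 < alpha) (Ha1 : alpha <= 1) (Hb : 0 < beta)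
  (Hm0 : 0 < mu) (Hm1 : mu <= 1)
  (Hx0 : 0 <= x0) (Hy0 : 0 <= y0) :
  (y0 > alpha / mu ->
     forall n : nat, 0 <= snd (orbit alpha beta mu x0 y0 n) <= y0) /\
  (y0 < alpha / mu ->
     forall n : nat, 0 <= snd (orbit alpha beta mu x0 y0 n) <= alpha / mu).
Proof.
  assert (Hmu : mu * (alpha / mu) = alpha) by (field; lra).
  split; intros Hy n.
  - assert (HM : alpha <= mu * y0).
    { rewrite <- Hmu; apply Rmult_le_compat_l; lra. }
    apply (orbit_in_box alpha beta mu x0 y0 y0); unfold in_box; simpl; lra.
  - apply (orbit_in_box alpha beta mu x0 y0 (alpha / mu)); unfold in_box; simpl; lra.
Qed.
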